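(* There exist finite category presentations $C,D,E$ and finite nongenerative uncurried profunctor presentations $P:C\nrightarrow D$ and $Q:D\nrightarrow E$ such that $[\![P]\!]\odot[\![Q]\!]:[\![C]\!]\nrightarrow[\![E]\!]$ does not admit a finite uncurried profunctor presentation (i.e. is not isomorphic to $[\![R]\!]$ for any finite uncurried presentation $R:C\nrightarrow E$).
   Context: Category presentations $C$: sorts, function symbols $f:c\to c'$, equations $C_E$ between parallel paths (composable lists of function symbols, possibly empty); finite if all these sets are finite. Provable equality $\approx_C$: the smallest equivalence relation on paths containing $C_E$ and closed under concatenation with composable function symbols; $[\![C]\!]$: sorts as objects, $\approx_C$-classes of paths as morphisms. Profunctors $\mathcal P:\mathcal C\nrightarrow\mathcal D$: categories over $\mathbf 2=\{0\to1\}$ with fibres $\mathcal C,\mathcal D$, equivalently functors $\mathcal C^{op}\times\mathcal D\to\mathbf{Set}$. Composite: $(\mathcal P\odot\mathcal Q)(c,e)=\int^{d}\mathcal P(c,d)\times\mathcal Q(d,e)$, the quotient of $\coprod_d\mathcal P(c,d)\times\mathcal Q(d,e)$ by the equivalence relation generated by $(p,\mathcal Q(g,1)q')\sim(\mathcal P(1,g)p,q')$ for $g:d\to d'$. Uncurried presentations $P:C\nrightarrow D$: a set $\mathrm{Fun}(P)$ of symbols $x:c\to d$ ($c$ a $C$-sort, $d$ a $D$-sort) and a set $P_E$ of equations between cross-paths (paths from a $C$-sort to a $D$-sort) of the category presentation $|P|$ with sorts $\mathrm{Sort}(C)+\mathrm{Sort}(D)$, symbols $\mathrm{Fun}(C)+\mathrm{Fun}(P)+\mathrm{Fun}(D)$,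 equations $C_E+P_E+D_E$; $\approx_P$ is provable equality of $|P|$ restricted to cross-paths; finite if $C,D,\mathrm{Fun}(P),P_E$ are finite; $[\![P]\!]=[\![|P|]\!]$ with $C$-sorts over $0$, $D$-sorts over $1$. A short left cross-path is $f.p$ with $f\in\mathrm{Fun}(C)$, $p\in\mathrm{Fun}(P)$; a right cross-path is $p.g$ with $p\in\mathrm{Fun}(P)$ and $g$ a $D$-path. $P$ is nongenerative if every short left cross-path is $\approx_P$-equal to some right cross-path. *)

From Stdlib Require Import List.
Import ListNotations.

Definition fin_type (T : Type) : Prop := exists l : list T, forall x : T, In x l.

(** Generic paths: a start sort and a list of symbols (diagrammatic order). *)
Fixpoint pok {S F : Type} (dom cod : F -> S) (a : S) (l : list F) : Prop :=
  match l with
  | [] => True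
  | f :: l' => dom f = a /\ pok dom cod (cod f) l'
  end.

Fixpoint pend {S F : Type} (cod : F -> S) (a : S) (l : list F) : S :=
  match l with
  | [] => a
  | f :: l' => pend cod (cod f) l'
  end.

Record CatPres : Type := {
  sort : Type;
  sym : Type;
  dom : sym -> sort;
  cod : sym -> sort;
  eqn : Type;
  lhs : eqn -> sort * list sym;
  rhs : eqn -> sort * list sym
}.

Definition path (C : CatPres) : Type := (sort C * list (sym C))%type.

Definition is_path (C : CatPres) (p : path C) : Prop :=
  pok (dom C) (cod C) (fst p) (snd p).

Definition psrc (C : CatPres) (p : path C) : sort C := fst p.
Definition ptgt (C : CatPres) (p : path C) : sort C := pend (cod C) (fst p) (snd p).

Definition pcat (C : CatPres) (p q : path C) : path C := (fst p, snd p ++ snd q).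

Definition CatPres_wf (C : CatPres) : Prop :=
  forall e : eqn C,
    is_path C (lhs C e) /\ is_path C (rhs C e) /\
    psrc C (lhs C e) = psrc C (rhs C e) /\ ptgt C (lhs C e) = ptgt C (rhs C e).

Definition CatPres_finite (C : CatPres) : Prop :=
  fin_type (sort C) /\ fin_type (sym C) /\ fin_type (eqn C).

Inductive peq (C : CatPres) : path C -> path C -> Prop :=
| peq_ax : forall e, peq C (lhs C e) (rhs C e)
| peq_refl : forall p, peq C p p
| peq_sym : forall p q, peq C p q -> peq C q p
| peq_trans : forall p q r, peq C p q -> peq C q r -> peq C p r
| peq_pre : forall (g : sym C) p q,
    cod C g = fst p -> cod C g = fst q -> peq C p q ->
    peq C (dom C g, g :: snd p) (dom C g, g :: snd q)
| peq_post : forall (f : sym C) p q,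
    ptgt C p = dom C f -> ptgt C q = dom C f -> peq C p q ->
    peq C (fst p, snd p ++ [f]) (fst q, snd q ++ [f]).

Definition approx (C : CatPres) (p q : path C) : Prop :=
  is_path C p /\ is_path C q /\ peq C p q.

Record UPres (C D : CatPres) : Type := {
  psym : Type;
  pdom : psym -> sort C;
  pcod : psym -> sort D;
  peqn : Type;
  plhs : peqn -> (sort C + sort D) * list ((sym C + psym) + sym D);
  prhs : peqn -> (sort C + sort D) * list ((sym C + psym) + sym D)
}.

Arguments psym {C D} u.
Arguments pdom {C D} u _.
Arguments pcod {C D} u _.
Arguments peqn {C D} u.
Arguments plhs {C D} u _.
Arguments prhs {C D} u _.

Definition tdom {C D : CatPres} (P : UPres C D)
  (x : (sym C + psym P) + sym D) : sort C + sort D :=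
  match x with
  | inl (inl f) => inl (dom C f)
  | inl (inr p) => inl (pdom P p)
  | inr g => inr (dom D g)
  end.

Definition tcod {C D : CatPres} (P : UPres C D)
  (x : (sym C + psym P) + sym D) : sort C + sort D :=
  match x with
  | inl (inl f) => inl (cod C f)
  | inl (inr p) => inr (pcod P p)
  | inr g => inr (cod D g)
  end.

Definition embL_path {C D : CatPres} {X : Type} (p : path C)
  : (sort C + sort D) * list ((sym C + X) + sym D) :=
  (inl (fst p), map (fun f => inl (inl f)) (snd p)).

Definition embR_path {C D : CatPres} {X : Type} (p : path D)
  : (sort C + sort D) * list ((sym C + X) + sym D) :=
  (inr (fst p), map (fun g => inr g) (snd p)).

Definition tlhs {C D : CatPres} (P : UPres C D) (e : (eqn C + peqn P) + eqn D)
  : (sort C + sort D) * list ((sym C + psym P) + sym D) :=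
  match e with
  | inl (inl e) => embL_path (lhs C e)
  | inl (inr e) => plhs P e
  | inr e => embR_path (lhs D e)
  end.

Definition trhs {C D : CatPres} (P : UPres C D) (e : (eqn C + peqn P) + eqn D)
  : (sort C + sort D) * list ((sym C + psym P) + sym D) :=
  match e with
  | inl (inl e) => embL_path (rhs C e)
  | inl (inr e) => prhs P e
  | inr e => embR_path (rhs D e)
  end.

Definition tot {C D : CatPres} (P : UPres C D) : CatPres :=
  {| sort := (sort C + sort D)%type;
     sym := ((sym C + psym P) + sym D)%type;
     dom := tdom P;
     cod := tcod P;
     eqn := ((eqn C + peqn P) + eqn D)%type;
     lhs := tlhs P;
     rhs := trhs P |}.

Definition cross {C D : CatPres} (P : UPres C D) (c : sort C) (d : sort D)
  (p : path (tot P)) : Prop :=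
  is_path (tot P) p /\ psrc (tot P) p = inl c /\ ptgt (tot P) p = inr d.

Definition is_cross {C D : CatPres} (P : UPres C D) (p : path (tot P)) : Prop :=
  exists c d, cross P c d p.

Definition UPres_wf {C D : CatPres} (P : UPres C D) : Prop :=
  forall e : peqn P,
    is_cross P (plhs P e) /\ is_cross P (prhs P e) /\
    psrc (tot P) (plhs P e) = psrc (tot P) (prhs P e) /\
    ptgt (tot P) (plhs P e) = ptgt (tot P) (prhs P e).

Definition UPres_finite {C D : CatPres} (P : UPres C D) : Prop :=
  CatPres_finite C /\ CatPres_finite D /\ fin_type (psym P) /\ fin_type (peqn P).

Definition embL {C D : CatPres} (P : UPres C D) (p : path C) : path (tot P) :=
  embL_path p.
Definition embR {C D : CatPres} (P : UPres C D) (p : path D) : path (tot P) :=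
  embR_path p.

Definition nongenerative {C D : CatPres} (P : UPres C D) : Prop :=
  forall (f : sym C) (p : psym P), cod C f = pdom P p ->
    exists (p' : psym P) (g : path D),
      is_path D g /\ psrc D g = pcod P p' /\
      approx (tot P)
        (inl (dom C f), [inl (inl f); inl (inr p)])
        (inl (pdom P p'), inl (inr p') :: snd (embR P g)).

(** Representatives of elements of ([[P]] (.) [[Q]])(c,e):
    triples (d, p, q) with p a P-cross-path c -> d, q a Q-cross-path d -> e. *)
Definition CompElt {C D E : CatPres} (P : UPres C D) (Q : UPres D E) : Type :=
  (sort D * path (tot P) * path (tot Q))%type.

Definition cvalid {C D E : CatPres} (P : UPres C D) (Q : UPres D E)
  (c : sort C) (e : sort E) (x : CompElt P Q) : Prop :=
  match x with (d, p, q) => cross P c d p /\ cross Q d e q end.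

Inductive ceq {C D E : CatPres} (P : UPres C D) (Q : UPres D E)
  : CompElt P Q -> CompElt P Q -> Prop :=
| ceq_comp : forall c e d p p' q q',
    cross P c d p -> cross P c d p' -> cross Q d e q -> cross Q d e q' ->
    approx (tot P) p p' -> approx (tot Q) q q' ->
    ceq P Q (d, p, q) (d, p', q')
| ceq_slide : forall c e d d' p (g : path D) q',
    cross P c d p -> cross Q d' e q' ->
    is_path D g -> psrc D g = d -> ptgt D g = d' ->
    ceq P Q (d, p, pcat (tot Q) (embL Q g) q') (d', pcat (tot P) p (embR P g), q')
| ceq_refl : forall x, ceq P Q x x
| ceq_sym : forall x y, ceq P Q x y -> ceq P Q y x
| ceq_trans : forall x y z, ceq P Q x y -> ceq P Q y z -> ceq P Q x z.

Definition comp_act {C D E : CatPres} (P : UPres C D) (Q : UPres D E)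
  (f : path C) (h : path E) (x : CompElt P Q) : CompElt P Q :=
  match x with
  | (d, p, q) => (d, pcat (tot P) (embL P f) p, pcat (tot Q) q (embR Q h))
  end.

Definition pres_act {C E : CatPres} (R : UPres C E)
  (f : path C) (h : path E) (x : path (tot R)) : path (tot R) :=
  pcat (tot R) (pcat (tot R) (embL R f) x) (embR R h).

(** [[P]] (.) [[Q]] is isomorphic (as a profunctor [[C]] -/-> [[E]]) to [[R]]:
    a natural family of bijections between the quotient sets, given on
    representatives. *)
Definition comp_iso_pres {C D E : CatPres} (P : UPres C D) (Q : UPres D E)
  (R : UPres C E) : Prop :=
  exists phi : forall (c : sort C) (e : sort E), CompElt P Q -> path (tot R),
    (forall c e x, cvalid P Q c e x -> cross R c e (phi c e x)) /\
    (forall c e x y, cvalid P Q c e x -> cvalid P Q c e y ->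
        ceq P Q x y -> approx (tot R) (phi c e x) (phi c e y)) /\
    (forall c e x y, cvalid P Q c e x -> cvalid P Q c e y ->
        approx (tot R) (phi c e x) (phi c e y) -> ceq P Q x y) /\
    (forall c e y, cross R c e y ->
        exists x, cvalid P Q c e x /\ approx (tot R) (phi c e x) y) /\
    (forall c c' e e' (f : path C) (h : path E) x,
        is_path C f -> psrc C f = c' -> ptgt C f = c ->
        is_path E h -> psrc E h = e -> ptgt E h = e' ->
        cvalid P Q c e x ->
        approx (tot R) (phi c' e' (comp_act P Q f h x))
                       (pres_act R f h (phi c e x))).

From Stdlib Require Import List PeanoNat Lia ClassicalEpsilon.
Import ListNotations.

(* Take C a point, D a single loop t, E free on letters a, b, c, P generated by one x, and Q
   by one y with t.y = y.a and y.b = y.c.  Sliding gives x.t^n (x) y ~ x (x) y.a^n, so the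
   composite is x (x) y acted on by words in a, b, c subject to a^n b = a^n c for every n.
   Reading t as a, the length of the initial run of a's (or where it stops) is an invariant
   of the coend relation.  A finite presentation R has finitely many generators and
   equations, so the runs they involve are bounded by some N; for n > N the automaton that
   also remembers the letter ending a run of exactly n a's respects every equation of R,
   yet tells a^n b from a^n c. *)

Fixpoint run {T S : Type} (step : T -> S -> S) (l : list T) (s : S) : S :=
  match l with
  | [] => s
  | t :: l => run step l (step t s)
  end.

Lemma run_app {T S} (step : T -> S -> S) l1 l2 s :
  run step (l1 ++ l2) s = run step l2 (run step l1 s).
Proof. induction l1 in s |- *; cbn; auto. Qed.

Lemma run_map {T U S} (f : T -> U) (step : U -> S -> S) l s :
  run step (map f l) s = run (fun t => step (f t)) l s.
Proof. induction l in s |- *; simpl; auto. Qed.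

Definition respects (T : CatPres) {S : Type} (step : sym T -> S -> S) : Prop :=
  forall e s, run step (snd (lhs T e)) s = run step (snd (rhs T e)) s.

Lemma peq_run (T : CatPres) {S} (step : sym T -> S -> S) :
  respects T step -> forall p q, peq T p q -> forall s, run step (snd p) s = run step (snd q) s.
Proof.
  intros Hax p q H; induction H; intros s; cbn [snd].
  - apply Hax.
  - reflexivity.
  - symmetry; auto.
  - rewrite IHpeq1; apply IHpeq2.
  - exact (IHpeq _).
  - rewrite !run_app, IHpeq. reflexivity.
Qed.

Lemma approx_run (T : CatPres) {S} (step : sym T -> S -> S) p q s :
  respects T step -> approx T p q -> run step (snd p) s = run step (snd q) s.
Proof. intros Hax (_ & _ & H). exact (peq_run T step Hax p q H s). Qed.

Lemma pok_app {S F} (dom cod : F -> S) a l1 l2 :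
  pok dom cod a (l1 ++ l2) <-> pok dom cod a l1 /\ pok dom cod (pend cod a l1) l2.
Proof. induction l1 in a |- *; simpl; [tauto | rewrite IHl1; tauto]. Qed.

Lemma pend_app {S F} (cod : F -> S) a l1 l2 :
  pend cod a (l1 ++ l2) = pend cod (pend cod a l1) l2.
Proof. induction l1 in a |- *; simpl; auto. Qed.

Section MapPath.
Variables (S F S' F' : Type) (dom cod : F -> S) (dom' cod' : F' -> S').
Variables (g : S -> S') (f : F -> F').
Hypothesis dom_map : forall x, dom' (f x) = g (dom x).
Hypothesis cod_map : forall x, cod' (f x) = g (cod x).

Lemma pok_map a l : pok dom cod a l -> pok dom' cod' (g a) (map f l).
Proof.
  induction l as [|x l IH] in a |- *; simpl; [tauto|].
  intros [<- H]. rewrite dom_map, cod_map. auto.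
Qed.

Lemma pend_map a l : pend cod' (g a) (map f l) = g (pend cod a l).
Proof. induction l as [|x l IH] in a |- *; simpl; [|rewrite cod_map]; auto. Qed.
End MapPath.

Section PathCategory.
Variable T : CatPres.

Lemma is_path_pcat p r :
  is_path T p -> is_path T r -> psrc T r = ptgt T p -> is_path T (pcat T p r).
Proof.
  unfold is_path, pcat, psrc, ptgt; cbn. intros Hp Hr E.
  apply pok_app; split; [exact Hp|]. rewrite <- E. exact Hr.
Qed.

Lemma ptgt_pcat p r : psrc T r = ptgt T p -> ptgt T (pcat T p r) = ptgt T r.
Proof. unfold pcat, psrc, ptgt; cbn. intros E. rewrite pend_app, <- E. reflexivity. Qed.

Lemma approx_refl p : is_path T p -> approx T p p.
Proof. repeat split; auto using peq_refl. Qed.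

Lemma approx_sym p q : approx T p q -> approx T q p.
Proof. intros (a & b & c); repeat split; auto using peq_sym. Qed.

Lemma approx_trans p q r : approx T p q -> approx T q r -> approx T p r.
Proof. intros (a & b & c) (d & e & f); repeat split; eauto using peq_trans. Qed.

Lemma peq_pcat_r p q r :
  peq T p q -> ptgt T p = ptgt T q -> is_path T r -> psrc T r = ptgt T p ->
  peq T (pcat T p r) (pcat T q r).
Proof.
  destruct r as [a l]; unfold is_path, psrc, pcat; cbn. intros H Et Hr Ea; subst a.
  induction l as [|x l IH] in p, q, H, Et, Hr |- *.
  - rewrite !app_nil_r. destruct p, q; exact H.
  - destruct Hr as [Hx Hr].
    specialize (IH (fst p, snd p ++ [x]) (fst q, snd q ++ [x])). cbn in IH.
    rewrite <- !app_assoc in IH. apply IH.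
    + apply peq_post; congruence.
    + unfold ptgt; cbn. rewrite !pend_app. fold (ptgt T p) (ptgt T q). rewrite Et. reflexivity.
    + unfold ptgt; cbn. rewrite pend_app. exact Hr.
Qed.

Lemma approx_pcat_r p q r :
  approx T p q -> ptgt T p = ptgt T q -> is_path T r -> psrc T r = ptgt T p ->
  approx T (pcat T p r) (pcat T q r).
Proof.
  intros (Hp & Hq & H) Et Hr Er. repeat split.
  - exact (is_path_pcat p r Hp Hr Er).
  - apply is_path_pcat; congruence.
  - exact (peq_pcat_r p q r H Et Hr Er).
Qed.
End PathCategory.

Section Embeddings.
Variables (C D : CatPres) (P : UPres C D).

Lemma is_path_embL p : is_path C p -> is_path (tot P) (embL P p).
Proof. apply (pok_map _ _ _ _ _ _ _ _ inl (fun f => inl (inl f))); reflexivity. Qed.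

Lemma ptgt_embL p : ptgt (tot P) (embL P p) = inl (ptgt C p).
Proof. apply (pend_map _ _ _ _ (cod C) _ inl (fun f => inl (inl f))); reflexivity. Qed.

Lemma is_path_embR p : is_path D p -> is_path (tot P) (embR P p).
Proof. apply (pok_map _ _ _ _ _ _ _ _ inr inr); reflexivity. Qed.

Lemma ptgt_embR p : ptgt (tot P) (embR P p) = inr (ptgt D p).
Proof. apply (pend_map _ _ _ _ (cod D) _ inr inr); reflexivity. Qed.

Lemma cross_embL_pcat c d p f :
  cross P c d p -> is_path C f -> ptgt C f = c ->
  cross P (psrc C f) d (pcat (tot P) (embL P f) p).
Proof.
  intros (Hp & Hs & Ht) Hf Ef.
  assert (E : psrc (tot P) p = ptgt (tot P) (embL P f)) by (rewrite ptgt_embL; congruence).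
  repeat split.
  - exact (is_path_pcat _ _ _ (is_path_embL f Hf) Hp E).
  - rewrite ptgt_pcat; assumption.
Qed.

Lemma cross_pcat_embR c d p g :
  cross P c d p -> is_path D g -> psrc D g = d ->
  cross P c (ptgt D g) (pcat (tot P) p (embR P g)).
Proof.
  intros (Hp & Hs & Ht) Hg Eg.
  assert (E : psrc (tot P) (embR P g) = ptgt (tot P) p) by (rewrite Ht, <- Eg; reflexivity).
  repeat split.
  - exact (is_path_pcat _ _ _ Hp (is_path_embR g Hg) E).
  - exact Hs.
  - rewrite ptgt_pcat, ptgt_embR; auto.
Qed.
End Embeddings.

Lemma cvalid_comp_act {C D E : CatPres} (P : UPres C D) (Q : UPres D E)
  c c' e e' (f : path C) (h : path E) x :
  is_path C f -> psrc C f = c' -> ptgt C f = c ->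
  is_path E h -> psrc E h = e -> ptgt E h = e' ->
  cvalid P Q c e x -> cvalid P Q c' e' (comp_act P Q f h x).
Proof.
  destruct x as [[d p] q]; intros Hf <- Ef Hh Eh <- [Hp Hq]. split.
  - exact (cross_embL_pcat C D P c d p f Hp Hf Ef).
  - exact (cross_pcat_embR D E Q d e q h Hq Hh Eh).
Qed.

Lemma fin_empty : fin_type Empty_set.
Proof. exists []; intros []. Qed.

Lemma fin_unit : fin_type unit.
Proof. exists [tt]; intros []; now left. Qed.

Lemma fin_type_bounded {T : Type} (f : T -> nat) : fin_type T -> exists N, forall t, f t <= N.
Proof.
  intros [l Hl]. exists (list_sum (map f l)). intros t.
  specialize (Hl t). unfold list_sum. induction l as [|a l IH]; cbn in *; [tauto|].
  destruct Hl as [<-|Hl]; [lia | specialize (IH Hl); lia].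
Qed.

Definition monoid_pres (X : Type) : CatPres :=
  {| sort := unit; sym := X; dom := fun _ => tt; cod := fun _ => tt; eqn := Empty_set;
     lhs := fun e => match e with end; rhs := fun e => match e with end |}.

Lemma monoid_pres_is_path X (p : path (monoid_pres X)) : is_path (monoid_pres X) p.
Proof.
  destruct p as [[] l]; unfold is_path; cbn.
  induction l; cbn; auto.
Qed.

Lemma monoid_pres_wf X : CatPres_wf (monoid_pres X).
Proof. intros []. Qed.

Lemma monoid_pres_finite X : fin_type X -> CatPres_finite (monoid_pres X).
Proof.
  intros HX; repeat split; [exact fin_unit | exact HX | exists []; intros []].
Qed.

Lemma pok_inr_map {C E : CatPres} (R : UPres C E) e l :
  pok (tdom R) (tcod R) (inr e) l -> exists u, l = map inr u.
Proof.
  induction l as [|t l IH] in e |- *; [exists []; reflexivity|].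
  destruct t as [[f|x]|g]; intros [Hd Hl]; try discriminate.
  destruct (IH _ Hl) as [u ->]. exists (g :: u). reflexivity.
Qed.

Lemma cross_from_point {E : CatPres} (R : UPres (monoid_pres Empty_set) E) c e y :
  cross R c e y -> exists x u, y = (inl c, inl (inr x) :: map inr u).
Proof.
  destruct y as [s [|[[[]|x]|g] l]]; intros (Hp & Hs & Ht); cbn in Hs; subst s;
    try discriminate.
  all: destruct Hp as [Hd Hl]; cbn in Hd; try discriminate.
  destruct (pok_inr_map R _ l Hl) as [u ->]. eauto.
Qed.

Inductive abc := la | lb | lc.

Lemma fin_abc : fin_type abc.
Proof. exists [la; lb; lc]; intros []; cbn; tauto. Qed.

Definition PointP : CatPres := monoid_pres Empty_set.
Definition LoopP : CatPres := monoid_pres unit.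
Definition AbcP : CatPres := monoid_pres abc.

Definition genP : UPres PointP LoopP :=
  Build_UPres PointP LoopP unit (fun _ => tt) (fun _ => tt)
    Empty_set (fun e => match e with end) (fun e => match e with end).

(* [inl (inl tt)] is the loop t and [inl (inr tt)] the generator y. *)
Definition slideQ : UPres LoopP AbcP :=
  Build_UPres LoopP AbcP unit (fun _ => tt) (fun _ => tt) bool
    (fun b => if b then (inl tt, [inl (inl tt); inl (inr tt)])
              else (inl tt, [inl (inr tt); inr lb]))
    (fun b => if b then (inl tt, [inl (inr tt); inr la])
              else (inl tt, [inl (inr tt); inr lc])).

Lemma genP_wf : UPres_wf genP.
Proof. intros []. Qed.

Lemma genP_finite : UPres_finite genP.
Proof.
  exact (conj (monoid_pres_finite _ fin_empty)
           (conj (monoid_pres_finite _ fin_unit) (conj fin_unit fin_empty))).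
Qed.

Lemma genP_nongenerative : nongenerative genP.
Proof. intros []. Qed.

Lemma slideQ_wf : UPres_wf slideQ.
Proof. intros []; repeat split; exists tt, tt; repeat split. Qed.

Lemma slideQ_finite : UPres_finite slideQ.
Proof.
  split; [exact (monoid_pres_finite _ fin_unit)|].
  split; [exact (monoid_pres_finite _ fin_abc)|].
  split; [exact fin_unit | exists [true; false]; intros []; cbn; tauto].
Qed.

Lemma slideQ_nongenerative : nongenerative slideQ.
Proof.
  intros [] [] _. exists tt, (tt, [la]). repeat split.
  exact (peq_ax (tot slideQ) (inl (inr true))).
Qed.

Inductive lead := leading (k : nat) | stopped (k : nat).

Definition lead_step (l : abc) (s : lead) : lead :=
  match s, l with
  | leading k, la => leading (S k)
  | leading k, _ => stopped k
  | stopped k, _ => stopped k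
  end.

Definition lead_bound (s : lead) : nat := match s with leading k | stopped k => k end.

Lemma run_lead_stopped w k : run lead_step w (stopped k) = stopped k.
Proof. induction w; auto. Qed.

Lemma run_lead_repeat m k : run lead_step (repeat la m) (leading k) = leading (m + k).
Proof.
  induction m in k |- *; auto.
  cbn. rewrite IHm. f_equal; lia.
Qed.

Lemma run_lead_stopped_le w s k :
  run lead_step w s = stopped k -> k <= lead_bound s + length w.
Proof.
  induction w as [|l w IH] in s |- *; cbn; intros H.
  - subst; cbn; lia.
  - apply IH in H. destruct s, l; cbn in *; lia.
Qed.

Inductive probe := unmarked (s : lead) | marked (l : abc).

Definition probe_step (n : nat) (l : abc) (p : probe) : probe :=
  match p, l with
  | unmarked (leading k), la => unmarked (leading (S k))
  | unmarked (leading k), _ => if Nat.eqb k n then marked l else unmarked (stopped k)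
  | unmarked (stopped k), _ => unmarked (stopped k)
  | marked l', _ => marked l'
  end.

Lemma run_probe_unmarked n w s :
  run lead_step w s <> stopped n ->
  run (probe_step n) w (unmarked s) = unmarked (run lead_step w s).
Proof.
  induction w as [|l w IH] in s |- *; cbn; intros H; [reflexivity|].
  rewrite <- IH by exact H. f_equal.
  destruct s as [k|k], l; cbn in *; try reflexivity;
    destruct (Nat.eqb_spec k n); subst; try reflexivity;
    now rewrite run_lead_stopped in H.
Qed.

(* The loop t is read as the letter a, so that sliding it across the tensor is invisible. *)
Definition genP_step (t : sym (tot genP)) : lead -> lead :=
  match t with
  | inr _ => lead_step la
  | inl _ => fun s => s
  end.

Definition slideQ_step (t : sym (tot slideQ)) : lead -> lead :=
  match t with
  | inl (inl _) => lead_step la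
  | inl (inr _) => fun s => s
  | inr l => lead_step l
  end.

Definition comp_lead (x : CompElt genP slideQ) : lead :=
  let '(_, p, q) := x in run slideQ_step (snd q) (run genP_step (snd p) (leading 0)).

Lemma genP_step_respects : respects (tot genP) genP_step.
Proof. intros [[[]|[]]|[]]. Qed.

Lemma slideQ_step_respects : respects (tot slideQ) slideQ_step.
Proof. intros [[[]|[]]|[]] [k|k]; reflexivity. Qed.

Lemma comp_lead_ceq x y : ceq genP slideQ x y -> comp_lead x = comp_lead y.
Proof.
  induction 1 as [c e d p p' q q' _ _ _ _ Hp Hq | c e d d' p g q' _ _ _ _ _ | | |];
    try congruence.
  - cbn. rewrite (approx_run _ _ _ _ _ genP_step_respects Hp).
    apply (approx_run _ _ _ _ _ slideQ_step_respects Hq).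
  - unfold comp_lead, pcat, embL, embR, embL_path, embR_path; cbn.
    rewrite !run_app, !run_map. reflexivity.
Qed.

Definition ract (x : CompElt genP slideQ) (w : list abc) : CompElt genP slideQ :=
  comp_act genP slideQ (tt, []) (tt, w) x.

Lemma comp_lead_ract x w : comp_lead (ract x w) = run lead_step w (comp_lead x).
Proof.
  destruct x as [[d p] q].
  unfold ract, comp_act, comp_lead, pcat, embL, embR, embL_path, embR_path; cbn.
  rewrite run_app, run_map. reflexivity.
Qed.

Lemma cvalid_ract x w : cvalid genP slideQ tt tt x -> cvalid genP slideQ tt tt (ract x w).
Proof.
  apply cvalid_comp_act; try apply monoid_pres_is_path; try reflexivity.
  now destruct (ptgt AbcP (tt, w)).
Qed.

Definition gen_elt (n : nat) : CompElt genP slideQ :=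
  (tt, pcat (tot genP) (inl tt, [inl (inr tt)]) (embR genP (tt, repeat tt n)),
   (inl tt, [inl (inr tt)])).

Lemma gen_elt_valid n : cvalid genP slideQ tt tt (gen_elt n).
Proof.
  split.
  - assert (Hx : cross genP tt tt (inl tt, [inl (inr tt)])) by repeat split.
    generalize (cross_pcat_embR _ _ _ _ _ _ ((tt, repeat tt n) : path LoopP) Hx
                  (monoid_pres_is_path _ _) eq_refl).
    now destruct (ptgt LoopP _).
  - repeat split.
Qed.

Lemma comp_lead_gen_elt n : comp_lead (gen_elt n) = leading n.
Proof.
  cbn. rewrite run_map.
  change (fun t : unit => genP_step (inr t)) with (fun t : unit => lead_step ((fun _ => la) t)).
  rewrite <- run_map, map_repeat, run_lead_repeat, Nat.add_0_r. reflexivity.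
Qed.

Lemma ceq_gen_elt_b_c n : ceq genP slideQ (ract (gen_elt n) [lb]) (ract (gen_elt n) [lc]).
Proof.
  destruct (cvalid_ract _ [lb] (gen_elt_valid n)) as [Hp Hq].
  destruct (cvalid_ract _ [lc] (gen_elt_valid n)) as [_ Hq'].
  apply (ceq_comp genP slideQ tt tt); try assumption.
  - apply approx_refl, Hp.
  - split; [apply Hq | split; [apply Hq' | exact (peq_ax (tot slideQ) (inl (inr false)))]].
Qed.

Section NoFinitePresentation.
Variable R : UPres PointP AbcP.
Hypothesis R_wf : UPres_wf R.
Variable phi : forall (c : sort PointP) (e : sort AbcP), CompElt genP slideQ -> path (tot R).
Hypothesis phi_cross : forall c e x, cvalid genP slideQ c e x -> cross R c e (phi c e x).
Hypothesis phi_ceq : forall c e x y, cvalid genP slideQ c e x -> cvalid genP slideQ c e y ->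
  ceq genP slideQ x y -> approx (tot R) (phi c e x) (phi c e y).
Hypothesis phi_approx : forall c e x y, cvalid genP slideQ c e x -> cvalid genP slideQ c e y ->
  approx (tot R) (phi c e x) (phi c e y) -> ceq genP slideQ x y.
Hypothesis phi_surj : forall c e y, cross R c e y ->
  exists x, cvalid genP slideQ c e x /\ approx (tot R) (phi c e x) y.
Hypothesis phi_natural : forall c c' e e' (f : path PointP) (h : path AbcP) x,
  is_path PointP f -> psrc PointP f = c' -> ptgt PointP f = c ->
  is_path AbcP h -> psrc AbcP h = e -> ptgt AbcP h = e' ->
  cvalid genP slideQ c e x ->
  approx (tot R) (phi c' e' (comp_act genP slideQ f h x))
                 (pres_act R f h (phi c e x)).

Definition word (y : psym R) (u : list abc) : path (tot R) := (inl tt, inl (inr y) :: map inr u).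

Lemma word_cross y u : cross R tt tt (word y u).
Proof.
  assert (Hy : cross R tt tt (inl tt, [inl (inr y)])).
  { split; [split; [cbn; now case (pdom R y) | exact I] | split; [reflexivity |]].
    cbn; now case (pcod R y). }
  generalize (cross_pcat_embR _ _ R _ _ _ ((tt, u) : path AbcP) Hy
                (monoid_pres_is_path _ _) eq_refl).
  now destruct (ptgt AbcP _).
Qed.

Lemma phi_ract_word x y u w :
  cvalid genP slideQ tt tt x -> approx (tot R) (phi tt tt x) (word y u) ->
  approx (tot R) (phi tt tt (ract x w)) (word y (u ++ w)).
Proof.
  intros Hx Ha.
  assert (Hw : ptgt AbcP (tt, w) = tt) by now destruct (ptgt AbcP _).
  eapply approx_trans.
  { apply (phi_natural tt tt tt tt (tt, []) (tt, w) x); try exact I; auto.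
    apply monoid_pres_is_path. }
  destruct (phi_cross _ _ _ Hx) as (_ & Hs & Ht).
  unfold pres_act.
  replace (pcat (tot R) (embL R (tt, [])) (phi tt tt x)) with (phi tt tt x)
    by (destruct (phi tt tt x); cbn in Hs; now subst).
  replace (word y (u ++ w)) with (pcat (tot R) (word y u) (embR R (tt, w)))
    by (unfold word, pcat; cbn; now rewrite map_app).
  destruct (word_cross y u) as (_ & _ & Ht').
  apply approx_pcat_r; [exact Ha | congruence | apply is_path_embR, monoid_pres_is_path | ].
  now rewrite Ht.
Qed.

Definition pre (y : psym R) : CompElt genP slideQ :=
  proj1_sig (constructive_indefinite_description _ (phi_surj tt tt (word y []) (word_cross y []))).

Lemma pre_spec y :
  cvalid genP slideQ tt tt (pre y) /\ approx (tot R) (phi tt tt (pre y)) (word y []).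
Proof. unfold pre. destruct constructive_indefinite_description as [x Hx]. exact Hx. Qed.

Definition gen_lead (y : psym R) : lead := comp_lead (pre y).

Lemma comp_lead_word x y u :
  cvalid genP slideQ tt tt x -> approx (tot R) (phi tt tt x) (word y u) ->
  comp_lead x = run lead_step u (gen_lead y).
Proof.
  intros Hx Ha. destruct (pre_spec y) as [Hy Hya].
  unfold gen_lead; rewrite <- comp_lead_ract.
  apply comp_lead_ceq, (phi_approx tt tt); auto using cvalid_ract.
  apply (approx_trans _ _ _ _ Ha), approx_sym, (phi_ract_word _ y []); assumption.
Qed.

Lemma word_approx_lead y u y' u' :
  approx (tot R) (word y u) (word y' u') ->
  run lead_step u (gen_lead y) = run lead_step u' (gen_lead y').
Proof.
  intros Ha. destruct (pre_spec y) as [Hy Hya].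
  unfold gen_lead; rewrite <- comp_lead_ract.
  apply (comp_lead_word _ _ _ (cvalid_ract _ u Hy)).
  apply (approx_trans _ _ _ _ (phi_ract_word _ y [] u Hy Hya) Ha).
Qed.

Definition R_probe_step (n : nat) (t : sym (tot R)) (s : probe) : probe :=
  match t with
  | inl (inl f) => match f with end
  | inl (inr y) => unmarked (gen_lead y)
  | inr l => probe_step n l s
  end.

Lemma run_R_probe_step_word n y u s :
  run (R_probe_step n) (snd (word y u)) s = run (probe_step n) u (unmarked (gen_lead y)).
Proof. cbn. rewrite run_map. reflexivity. Qed.

Definition large (n : nat) : Prop :=
  forall y e, lead_bound (gen_lead y) + length (snd (plhs R e)) + length (snd (prhs R e)) < n.

Lemma exists_large : UPres_finite R -> exists n, large n.
Proof.
  intros (_ & _ & Hsym & Heqn).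
  destruct (fin_type_bounded (fun y => lead_bound (gen_lead y)) Hsym) as [N1 H1].
  destruct (fin_type_bounded (fun e => length (snd (plhs R e)) + length (snd (prhs R e))) Heqn)
    as [N2 H2].
  exists (S (N1 + N2)). intros y e. specialize (H1 y); specialize (H2 e); cbn in *; lia.
Qed.

Lemma R_probe_step_respects n : large n -> respects (tot R) (R_probe_step n).
Proof.
  intros Hn [[[]|e]|[]] s.
  destruct (R_wf e) as ([c [d Hl]] & [c' [d' Hr]] & _).
  destruct (cross_from_point R _ _ _ Hl) as (y & u & Elu).
  destruct (cross_from_point R _ _ _ Hr) as (y' & u' & Eru).
  destruct c, c'.
  assert (Happrox : approx (tot R) (word y u) (word y' u')).
  { assert (H : approx (tot R) (plhs R e) (prhs R e))
      by (split; [apply Hl | split; [apply Hr | exact (peq_ax (tot R) (inl (inr e)))]]).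
    rewrite Elu, Eru in H. exact H. }
  pose proof (Hn y e) as Hb; pose proof (Hn y' e) as Hb'.
  change (run (R_probe_step n) (snd (plhs R e)) s = run (R_probe_step n) (snd (prhs R e)) s).
  rewrite Elu, Eru in *. cbn [snd length] in Hb, Hb'. rewrite !length_map in Hb, Hb'.
  change (sym AbcP) with abc in Hb, Hb'.
  change (run (R_probe_step n) (snd (word y u)) s = run (R_probe_step n) (snd (word y' u')) s).
  rewrite !run_R_probe_step_word, !run_probe_unmarked, (word_approx_lead _ _ _ _ Happrox);
    [reflexivity | |]; intros E; apply run_lead_stopped_le in E; lia.
Qed.

Lemma finite_presentation_absurd : UPres_finite R -> False.
Proof.
  intros Hfin. destruct (exists_large Hfin) as [n Hn].
  pose proof (gen_elt_valid n) as Hv.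
  destruct (cross_from_point R _ _ _ (phi_cross _ _ _ Hv)) as (y & u & Eyu).
  assert (Hword : approx (tot R) (phi tt tt (gen_elt n)) (word y u)).
  { rewrite Eyu. apply approx_refl, (word_cross y u). }
  assert (Hlead : run lead_step u (gen_lead y) = leading n).
  { rewrite <- (comp_lead_word _ _ _ Hv Hword). apply comp_lead_gen_elt. }
  assert (Hbc : approx (tot R) (word y (u ++ [lb])) (word y (u ++ [lc]))).
  { eapply approx_trans; [apply approx_sym, (phi_ract_word _ _ _ _ Hv Hword)|].
    eapply approx_trans;
      [exact (phi_ceq tt tt _ _ (cvalid_ract _ _ Hv) (cvalid_ract _ _ Hv) (ceq_gen_elt_b_c n))|].
    apply (phi_ract_word _ _ _ _ Hv Hword). }
  pose proof (approx_run _ _ _ _ (unmarked (leading 0)) (R_probe_step_respects n Hn) Hbc)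
    as Hrun.
  rewrite !run_R_probe_step_word, !run_app, run_probe_unmarked, Hlead in Hrun by congruence.
  cbn in Hrun. rewrite Nat.eqb_refl in Hrun. discriminate.
Qed.

End NoFinitePresentation.

Lemma no_finite_presentation (R : UPres PointP AbcP) :
  UPres_wf R -> UPres_finite R -> ~ comp_iso_pres genP slideQ R.
Proof.
  intros Hwf Hfin (phi & H1 & H2 & H3 & H4 & H5).
  exact (finite_presentation_absurd R Hwf phi H1 H2 H3 H4 H5 Hfin).
Qed.

Theorem mainTheorem17 :
  exists (C D E : CatPres) (P : UPres C D) (Q : UPres D E),
    CatPres_wf C /\ CatPres_wf D /\ CatPres_wf E /\
    CatPres_finite C /\ CatPres_finite D /\ CatPres_finite E /\
    UPres_wf P /\ UPres_finite P /\ nongenerative P /\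
    UPres_wf Q /\ UPres_finite Q /\ nongenerative Q /\
    forall R : UPres C E, UPres_wf R -> UPres_finite R -> ~ comp_iso_pres P Q R.
Proof.
  exists PointP, LoopP, AbcP, genP, slideQ.
  split; [apply monoid_pres_wf|]. split; [apply monoid_pres_wf|]. split; [apply monoid_pres_wf|].
  split; [exact (monoid_pres_finite _ fin_empty)|].
  split; [exact (monoid_pres_finite _ fin_unit)|].
  split; [exact (monoid_pres_finite _ fin_abc)|].
  split; [exact genP_wf|]. split; [exact genP_finite|]. split; [exact genP_nongenerative|].
  split; [exact slideQ_wf|]. split; [exact slideQ_finite|]. split; [exact slideQ_nongenerative|].
  exact no_finite_presentation.
Qed.
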